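(* Let $n_1,n_2,n_3,n_4,k_1,k_2$ be six pairwise distinct positive integers. Then the $4\times 4$ real matrix whose $i$-th row ($i=1,2,3,4$) is $$\Big(\frac{1}{n_i^2},\ \frac{1}{n_i},\ \frac{1}{n_i-k_1}+\frac{1}{n_i+k_1},\ \frac{1}{n_i-k_2}+\frac{1}{n_i+k_2}\Big)$$ is nonsingular (has full rank). *)

From HB Require Import structures.
From mathcomp Require Import all_boot all_order all_algebra.
Set Implicit Arguments. Unset Strict Implicit. Unset Printing Implicit Defensive.
Import Order.TTheory GRing.Theory Num.Theory.
Local Open Scope ring_scope.

Definition lemma3_row (R : realFieldType) (k1 k2 m : nat) : 'rV[R]_4 :=
  \row_(j < 4)
    match val j with
    | 0%N => (m%:R ^+ 2)^-1
    | 1%N => (m%:R)^-1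
    | 2%N => (m%:R - k1%:R)^-1 + (m%:R + k1%:R)^-1
    | _ => (m%:R - k2%:R)^-1 + (m%:R + k2%:R)^-1
    end.

Definition lemma3_mx (R : realFieldType) (n1 n2 n3 n4 k1 k2 : nat) : 'M[R]_4 :=
  \matrix_(i < 4)
    lemma3_row R k1 k2 (nth 0%N [:: n1; n2; n3; n4] i).

(* Multiplying the row of [n] by [n^2 (n^2 - k1^2) (n^2 - k2^2)] clears all
   denominators, since [1/(n-k) + 1/(n+k) = 2n/(n^2-k^2)].  The cleared matrix
   has polynomial entries, and its determinant factors as
   [-4 k1^2 k2^2 (k2^2 - k1^2)] times the Vandermonde product of the [n_i]
   times a polynomial with positive coefficients; every factor is nonzero. *)
From HB Require Import structures.
From mathcomp Require Import all_boot all_order all_algebra.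
From mathcomp Require Import ring.
Set Implicit Arguments. Unset Strict Implicit. Unset Printing Implicit Defensive.
Import Order.TTheory GRing.Theory Num.Theory.
Local Open Scope ring_scope.

Section ClearedMatrix.
Variable R : comPzRingType.
Variables a b : R.

Definition common_denom (x : R) : R := x ^+ 2 * ((x ^+ 2 - a ^+ 2) * (x ^+ 2 - b ^+ 2)).

Definition cleared_row (x : R) : 'rV[R]_4 :=
  \row_(j < 4)
    match val j with
    | 0%N => (x ^+ 2 - a ^+ 2) * (x ^+ 2 - b ^+ 2)
    | 1%N => x * ((x ^+ 2 - a ^+ 2) * (x ^+ 2 - b ^+ 2))
    | 2%N => 2 * x ^+ 3 * (x ^+ 2 - b ^+ 2)
    | _ => 2 * x ^+ 3 * (x ^+ 2 - a ^+ 2)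
    end.

Definition cleared_mx (xs : seq R) : 'M[R]_4 := \matrix_(i < 4) cleared_row xs`_i.

Variables x1 x2 x3 x4 : R.

Definition vandermonde4 : R :=
  (x2 - x1) * (x3 - x1) * (x4 - x1) * (x3 - x2) * (x4 - x2) * (x4 - x3).

Definition esym3 : R := x1 * x2 * x3 + x1 * x2 * x4 + x1 * x3 * x4 + x2 * x3 * x4.

(* [a^2 b^2 (e1 e2 - e3) + (a^2 + b^2) e1 e4 + e3 e4] in the elementary
   symmetric polynomials [e_i] of the [x_i], with [e1 e2 - e3] expanded so
   that all coefficients are visibly positive. *)
Definition cleared_det_cofactor : R :=
  a ^+ 2 * b ^+ 2 *
    (x1 ^+ 2 * (x2 + x3 + x4) + x2 ^+ 2 * (x1 + x3 + x4)
     + x3 ^+ 2 * (x1 + x2 + x4) + x4 ^+ 2 * (x1 + x2 + x3) + esym3 + esym3)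
  + (x1 + x2 + x3 + x4) * (x1 * x2 * x3 * x4) * (a ^+ 2 + b ^+ 2)
  + esym3 * (x1 * x2 * x3 * x4).

Lemma det_cleared_mx :
  \det (cleared_mx [:: x1; x2; x3; x4]) =
  - 4 * a ^+ 2 * b ^+ 2 * (b ^+ 2 - a ^+ 2) * vandermonde4 * cleared_det_cofactor.
Proof.
do 4 rewrite !(expand_det_row _ ord0) !big_ord_recl !big_ord0 /cofactor.
rewrite !det_mx00 !mxE /= /vandermonde4 /cleared_det_cofactor /esym3.
ring.
Qed.

End ClearedMatrix.

Lemma cleared_det_cofactor_gt0 (R : realDomainType) (a b x1 x2 x3 x4 : R) :
  0 < a -> 0 < b -> 0 < x1 -> 0 < x2 -> 0 < x3 -> 0 < x4 ->
  0 < cleared_det_cofactor a b x1 x2 x3 x4.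
Proof.
move=> *; rewrite /cleared_det_cofactor /esym3.
by repeat first [assumption | apply: addr_gt0 | apply: mulr_gt0 | apply: exprn_gt0].
Qed.

Lemma natr_sqr_sub_neq0 (R : numDomainType) (m n : nat) :
  m != n -> m%:R ^+ 2 - n%:R ^+ 2 != 0 :> R.
Proof. by rewrite subr_eq0 -!natrX eqr_nat eqn_exp2r. Qed.

Lemma natr_sub_neq0 (R : numDomainType) (m n : nat) :
  m != n -> m%:R - n%:R != 0 :> R.
Proof. by rewrite subr_eq0 eqr_nat. Qed.

Lemma vandermonde4_natr_neq0 (R : numDomainType) (n1 n2 n3 n4 : nat) :
  uniq [:: n1; n2; n3; n4] -> vandermonde4 n1%:R n2%:R n3%:R n4%:R != 0 :> R.
Proof.
rewrite /= !inE !negb_or => /and4P[/and3P[n12 n13 n14] /andP[n23 n24] n34 _].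
by rewrite /vandermonde4 !mulf_neq0 // natr_sub_neq0 // eq_sym.
Qed.

Section RowClearing.
Variable R : realFieldType.
Variables k1 k2 m : nat.
Hypotheses (m_gt0 : (0 < m)%N) (m_neq_k1 : m != k1) (m_neq_k2 : m != k2).

Lemma common_denom_neq0 : common_denom k1%:R k2%:R m%:R != 0 :> R.
Proof.
by rewrite /common_denom !mulf_neq0 ?natr_sqr_sub_neq0 // lt0r_neq0 ?ltr0n.
Qed.

Lemma lemma3_rowE :
  lemma3_row R k1 k2 m =
  (common_denom k1%:R k2%:R m%:R)^-1 *: cleared_row k1%:R k2%:R m%:R.
Proof.
have m_neq0 : m%:R != 0 :> R by rewrite lt0r_neq0 ?ltr0n.
have add_neq0 k : m%:R + k%:R != 0 :> R by rewrite -natrD lt0r_neq0 // ltr0n addn_gt0 m_gt0.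
apply/rowP => j; rewrite !mxE /common_denom.
case: j => [[|[|[|[|//]]]] _] /=; field;
  by rewrite ?natr_sqr_sub_neq0 ?natr_sub_neq0 ?m_neq0 ?add_neq0.
Qed.

End RowClearing.

Lemma lemma3_mx_factor (R : realFieldType) (n1 n2 n3 n4 k1 k2 : nat) :
  let ns := [:: n1; n2; n3; n4] in
  all (fun m => [&& (0 < m)%N, m != k1 & m != k2]) ns ->
  lemma3_mx R n1 n2 n3 n4 k1 k2 =
  diag_mx (\row_(i < 4) (common_denom k1%:R k2%:R (nth 0%N ns i)%:R)^-1) *m
  cleared_mx k1%:R k2%:R [seq m%:R | m <- ns].
Proof.
move=> ns /all_nthP ns_ok; apply/row_matrixP => i.
have /and3P[m_gt0 m_neq_k1 m_neq_k2] := ns_ok 0%N i (ltn_ord i).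
by rewrite row_mul row_diag_mx -scalemxAl -rowE !rowK mxE (nth_map 0%N) ?lemma3_rowE.
Qed.

Theorem lemma3 (R : realFieldType) (n1 n2 n3 n4 k1 k2 : nat) :
  uniq [:: n1; n2; n3; n4; k1; k2] ->
  all (fun m => 0 < m)%N [:: n1; n2; n3; n4; k1; k2] ->
  \det (lemma3_mx R n1 n2 n3 n4 k1 k2) != 0.
Proof.
rewrite -/([:: n1; n2; n3; n4] ++ [:: k1; k2]) cat_uniq all_cat.
move=> /and3P[uniq_ns /hasPn ks_notin_ns uniq_ks] /andP[ns_gt0 /and3P[k1_gt0 k2_gt0 _]].
have ns_ok : all (fun m => [&& (0 < m)%N, m != k1 & m != k2]) [:: n1; n2; n3; n4].
  apply/allP => m m_ns; rewrite (allP ns_gt0) //=.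
  have m_neq k : k \in [:: k1; k2] -> m != k.
    by move=> /ks_notin_ns; apply: contraNneq => <-.
  by rewrite !m_neq // !inE eqxx ?orbT.
rewrite lemma3_mx_factor // det_mulmx det_diag det_cleared_mx.
have natr_neq0 k : (0 < k)%N -> k%:R != 0 :> R by move=> ?; rewrite lt0r_neq0 ?ltr0n.
apply: mulf_neq0; [|apply: mulf_neq0; [apply: mulf_neq0|]].
- apply/prodf_neq0 => i _; rewrite mxE invr_eq0.
  by have /and3P[] := all_nthP 0%N ns_ok i (ltn_ord i); apply: common_denom_neq0.
- have k2_neq_k1 : k2 != k1 by move: uniq_ks; rewrite /= inE andbT eq_sym.
  by rewrite !mulf_neq0 ?expf_neq0 ?natr_neq0 ?natr_sqr_sub_neq0 // oppr_eq0 pnatr_eq0.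
- exact: vandermonde4_natr_neq0.
- have /and5P[n1_gt0 n2_gt0 n3_gt0 n4_gt0 _] := ns_gt0.
  by rewrite lt0r_neq0 // cleared_det_cofactor_gt0 ?ltr0n.
Qed.
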